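(* Let $X_B'\subseteq\mathbb{P}^5$ be the image of the morphism $$\eta:\mathbb{P}^2\ni(a:b:c)\longmapsto \big(a^3: b^3: c^3: a(b^2-c^2): b(a^2-c^2): c(a^2-b^2)\big)\in\mathbb{P}^5,$$ and let $Z\subset\mathbb{P}^2$ be the set of nine points $(1:0:0),(0:1:0),(0:0:1),(1:1:0),(1:-1:0),(1:0:1),(1:0:-1),(0:1:1),(0:1:-1)$. Then $X_B'$ is hypo-osculating; more precisely, $\dim \mathrm{Osc}^{(2)}_{\eta(Q)}X_B'=4$ for all $Q\in\mathbb{P}^2\setminus Z$, while $\dim\mathrm{Osc}^{(2)}_{\eta(Q)}X_B'=3$ for each of the nine points $Q\in Z$.
   Context: For a point $\eta(Q)$ of the surface $X_B'$ parametrized by $\eta$, the second osculating space $\mathrm{Osc}^{(2)}_{\eta(Q)}X_B'$ is the linear subspace of $\mathbb{P}^5$ spanned by the point and the partial derivatives of order $\le 2$ of the coordinate functions with respect to local parameters at the point, evaluated there (equivalently, the projectivized span of all second-order partial derivatives of the cubic forms defining $\eta$ with respect to $a,b,c$, evaluated at $Q$). A surface in $\mathbb{P}^5$ is hypo-osculating if this dimension is lower than the expected value $5$ at every point. *)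

From HB Require Import structures.
From mathcomp Require Import all_boot all_order all_algebra.
From mathcomp Require Import mpoly.
Set Implicit Arguments. Unset Strict Implicit. Unset Printing Implicit Defensive.
Import GRing.Theory.
Local Open Scope ring_scope.

(* Working over an algebraically closed field F of characteristic 0
   (e.g. the complex numbers). Homogeneous coordinates (a:b:c) are vectors
   'I_3 -> F; index 0 = a, 1 = b, 2 = c. *)

Section Eta.
Variable F : fieldType.

Definition xa : {mpoly F[3]} := 'X_(0 : 'I_3).
Definition xb : {mpoly F[3]} := 'X_(1 : 'I_3).
Definition xc : {mpoly F[3]} := 'X_(2 : 'I_3).

Definition eta_form (j : 'I_6) : {mpoly F[3]} :=
  match val j with
  | 0 => xa ^+ 3
  | 1 => xb ^+ 3
  | 2 => xc ^+ 3
  | 3 => xa * (xb ^+ 2 - xc ^+ 2)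
  | 4 => xb * (xa ^+ 2 - xc ^+ 2)
  | _ => xc * (xa ^+ 2 - xb ^+ 2)
  end.

(* Its row space is the affine cone over
   Osc^(2)_{eta(Q)} X_B' in P^5. *)
Definition point_row (Q : 'I_3 -> F) : 'M[F]_(1, 6) :=
  \matrix_(r < 1, j < 6) (eta_form j).@[Q].
Definition first_derivs (Q : 'I_3 -> F) : 'M[F]_(3, 6) :=
  \matrix_(i < 3, j < 6) (mderiv i (eta_form j)).@[Q].
Definition second_derivs (i : 'I_3) (Q : 'I_3 -> F) : 'M[F]_(3, 6) :=
  \matrix_(k < 3, j < 6) (mderiv k (mderiv i (eta_form j))).@[Q].

Definition osc_matrix (Q : 'I_3 -> F) :=
  col_mx (point_row Q)
    (col_mx (first_derivs Q)
      (col_mx (second_derivs 0 Q)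
        (col_mx (second_derivs 1 Q) (second_derivs 2 Q)))).

Definition osc2_dim (Q : 'I_3 -> F) : nat := (\rank (osc_matrix Q)).-1.

Definition same_point (Q P : 'I_3 -> F) : Prop :=
  exists k : F, k != 0 /\ forall i, Q i = k * P i.

Definition vec3 (a b c : F) : 'I_3 -> F :=
  fun i => match val i with 0 => a | 1 => b | _ => c end.

Definition Zpts : seq ('I_3 -> F) :=
  [:: vec3 1 0 0; vec3 0 1 0; vec3 0 0 1;
      vec3 1 1 0; vec3 1 (-1) 0; vec3 1 0 1;
      vec3 1 0 (-1); vec3 0 1 1; vec3 0 1 (-1)].

Definition nonzero3 (Q : 'I_3 -> F) : Prop := exists i, Q i != 0.

Definition inZ (Q : 'I_3 -> F) : Prop :=
  exists2 t : nat, (t < 9)%N & same_point Q (nth (fun _ => 0) Zpts t).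

Definition hypo_osculating : Prop :=
  forall Q : 'I_3 -> F, nonzero3 Q -> (osc2_dim Q < 5)%N.

End Eta.

(* The osculating space at eta(Q) is dual to the cubics sum_j u_j eta_j with a
   triple point at Q.  By Euler's formula the value and the first partials of a
   homogeneous cubic at Q are combinations of its second partials there, so the
   condition on u is that the Hessian of sum_j u_j eta_j vanishes at Q: six linear
   equations, and dim Osc^(2) = 5 - dim of their solution space.  This space
   always contains
     v(Q) = (bc(b^2-c^2), ca(c^2-a^2), ab(a^2-b^2), 3a^2bc, -3ab^2c, 3abc^2),
   whose zero locus in P^2 is exactly Z, and every solution u satisfies
   u_i v_j = u_j v_i because these minors lie in the ideal of the equations.
   Hence off Z the solutions form the line through v(Q), while at the nine points
   of Z they form a plane, which is checked directly. *)

From HB Require Import structures.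
From mathcomp Require Import all_boot all_order all_algebra.
From mathcomp Require Import mpoly ring.
Set Implicit Arguments. Unset Strict Implicit. Unset Printing Implicit Defensive.
Import GRing.Theory.
Local Open Scope ring_scope.

Lemma eq0_of_mulf (R : idomainType) (c x : R) : c != 0 -> c * x = 0 -> x = 0.
Proof. by move=> c_neq0 /eqP; rewrite mulf_eq0 (negbTE c_neq0) => /eqP. Qed.

Lemma ord3P (i : 'I_3) : [\/ i = 0, i = 1 | i = 2].
Proof.
by case: i => -[|[|[|//]]] ?; [constructor 1 | constructor 2 | constructor 3]; exact: val_inj.
Qed.

Section Euler.
Variables (n : nat) (R : comNzRingType).
Implicit Types (p : {mpoly R[n]}) (v : 'I_n -> R).

Lemma mderiv_dhomog i d p : p \is d.-homog -> p^`M(i) \is d.-1.-homog.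
Proof.
move=> /dhomogP hp; apply/dhomogP => m; rewrite mcoeff_msupp mcoeff_deriv.
have [p0|] := eqVneq p@_(m + U_(i)) 0; first by rewrite p0 mul0rn eqxx.
by rewrite -mcoeff_msupp => /hp <-; rewrite mfD /= mdeg1 addn1.
Qed.

Lemma Euler_mpolyX (m : 'X_{1..n}) :
  \sum_i 'X_i * ('X_[m] : {mpoly R[n]})^`M(i) = 'X_[m] *+ mdeg m.
Proof.
rewrite mdegE -sumrMnr; apply: eq_bigr => i _.
rewrite mderivX -scaler_nat -scalerAr -mpolyXD.
have [->|mi_neq0] := eqVneq (m i) 0%N; first by rewrite !scale0r.
rewrite addmC submK //.
by apply/mnm_lepP => k; rewrite mnm1E; case: eqP => [<-|]; rewrite ?lt0n.
Qed.

Lemma Euler_dhomog d p : p \is d.-homog -> \sum_i 'X_i * p^`M(i) = p *+ d.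
Proof.
move=> /dhomogP hp; rewrite {1 2}(mpolyE p).
under eq_bigr => i _ do rewrite raddf_sum /= big_distrr.
rewrite exchange_big -sumrMnl big_seq [RHS]big_seq; apply: eq_bigr => m mp.
rewrite -(hp m mp) /=.
under eq_bigr => i _ do rewrite mderivZ -scalerAr.
by rewrite -scaler_sumr Euler_mpolyX scalerMnr.
Qed.

Lemma Euler_meval d p v : p \is d.-homog -> \sum_i v i * (p^`M(i)).@[v] = p.@[v] *+ d.
Proof.
move/Euler_dhomog/(congr1 (meval v)); rewrite mevalMn raddf_sum /= => <-.
by apply: eq_bigr => i _; rewrite mevalM mevalXU.
Qed.
End Euler.

Lemma meval_dhomog_eq0 (R : idomainType) n d (p : {mpoly R[n]}) v :
  p \is d.-homog -> d%:R != 0 :> R -> (forall i, (p^`M(i)).@[v] = 0) -> p.@[v] = 0.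
Proof.
move=> /(Euler_meval v) Euler_p d_neq0 dp0; apply: (eq0_of_mulf d_neq0).
rewrite mulrC mulr_natr -Euler_p big1 // => i _.
by rewrite dp0 mulr0.
Qed.

Lemma mderivXU (n : nat) (R : nzRingType) (i k : 'I_n) :
  mderiv k ('X_i : {mpoly R[n]}) = ((i == k)%:R)%:MP.
Proof.
rewrite mderivX mnm1E; have [<-|] := eqVneq i k; last by rewrite scale0r mpolyC0.
have -> : (U_(i) - U_(i))%MM = 0%MM by apply/mnmP => l; rewrite mnmBE subnn mnm0E.
by rewrite mpolyX0 scale1r mpolyC1.
Qed.

Section KernelRank.
Variable F : fieldType.

Lemma mxrank_ker_coord k m n (A : 'M[F]_(m, n)) (K : 'M_(k, m)) (s : 'I_k -> 'I_m) :
  K *m A = 0 -> colsub s K \in unitmx ->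
  (forall u : 'rV_m, u *m A = 0 -> colsub s u = 0 -> u = 0) ->
  \rank A = (m - k)%N.
Proof.
move=> KA0 Ks_unit injA.
suff <- : \rank (kermx A) = k by rewrite mxrank_ker subKn ?rank_leq_row.
have colsubE p (B : 'M_(p, m)) : colsub s B = B *m colsub s 1%:M.
  by rewrite mulmx_colsub mulmx1.
have rankK : \rank K = k.
  apply/eqP; rewrite eqn_leq rank_leq_row -{1}(mxrank_unit Ks_unit) colsubE.
  exact: mxrankM_maxl.
rewrite -rankK; apply/eqmx_rank/andP; split; last by rewrite sub_kermx KA0.
apply/row_subP => r; set u := row r (kermx A).
have uA0 : u *m A = 0 by rewrite -row_mul mulmx_ker row0.
suff -> : u = colsub s u *m invmx (colsub s K) *m K by apply: submxMl.
apply/eqP; rewrite -subr_eq0; apply/eqP/injA.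
  by rewrite mulmxBl -!mulmxA KA0 !mulmx0 uA0 subrr.
by rewrite colsubE mulmxBl -!mulmxA -!colsubE mulVmx ?mulmx1 ?subrr.
Qed.

Lemma mxrank_ker_line m n (A : 'M[F]_(m, n)) (w : 'rV_m) (i : 'I_m) :
  w *m A = 0 -> w 0 i != 0 -> (forall u : 'rV_m, u *m A = 0 -> u 0 i = 0 -> u = 0) ->
  \rank A = (m - 1)%N.
Proof.
move=> wA0 wi_neq0 injA; apply: (mxrank_ker_coord (s := fun=> i) wA0).
  by rewrite unitmxE det_mx11 mxE unitfE.
by move=> u uA0 /matrixP/(_ 0 0); rewrite !mxE => /injA; apply.
Qed.

Lemma mxrank_ker_plane m n (A : 'M[F]_(m, n)) (w1 w2 : 'rV_m) (i j : 'I_m) :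
  w1 *m A = 0 -> w2 *m A = 0 -> w1 0 i != 0 -> w1 0 j = 0 -> w2 0 j != 0 ->
  (forall u : 'rV_m, u *m A = 0 -> u 0 i = 0 -> u 0 j = 0 -> u = 0) ->
  \rank A = (m - 2)%N.
Proof.
move=> w1A0 w2A0 w1i_neq0 w1j0 w2j_neq0 injA.
pose K : 'M_(2, m) := \matrix_(r, c) (if r == 0 then w1 0 c else w2 0 c).
apply: (mxrank_ker_coord (K := K) (s := fun l => if l == 0 then i else j)).
- apply/row_matrixP => r; rewrite row_mul row0.
  have -> : row r K = if r == 0 then w1 else w2.
    by apply/rowP => c; rewrite !mxE; case: (r == 0).
  by case: (r == 0).
- rewrite unitmxE det_trig ?unitfE.
    by rewrite !big_ord_recr big_ord0 /= !mxE mul1r mulf_neq0.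
  by apply/is_trig_mxP => -[[|[|//]] ?] [[|[|//]] ?] //= _; rewrite !mxE.
move=> u uA0 /matrixP us0; apply: injA => //.
  by have := us0 0 0; rewrite !mxE.
by have := us0 0 1; rewrite !mxE.
Qed.
End KernelRank.

Section Osculating.
Variable F : fieldType.
Hypotheses (two_neq0 : (2 : F) != 0) (three_neq0 : (3 : F) != 0).
Implicit Types (Q : 'I_3 -> F) (u : 'rV[F]_6).

Definition eta_comb (u : 'rV[F]_6) : {mpoly F[3]} := \sum_j u 0 j *: eta_form F j.

Lemma eta_comb_dhomog u : eta_comb u \is 3.-homog.
Proof.
have X1 i : ('X_i : {mpoly F[3]}) \is 1.-homog by rewrite dhomogX /= mdeg1.
have X2 i : ('X_i : {mpoly F[3]}) ^+ 2 \is 2.-homog by exact: (dhomogMn 2 (X1 i)).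
have X3 i : ('X_i : {mpoly F[3]}) ^+ 3 \is 3.-homog by exact: (dhomogMn 3 (X1 i)).
have XX i k l : ('X_i * ('X_k ^+ 2 - 'X_l ^+ 2) : {mpoly F[3]}) \is 3.-homog.
  exact: (dhomogM (X1 i) (rpredB (X2 k) (X2 l))).
apply: rpred_sum => j _; apply: rpredZ.
case: j => -[|[|[|[|[|[|//]]]]]] ? /=; by [exact: X3 | exact: XX].
Qed.

Lemma mderiv_lincomb i (p : 'I_6 -> {mpoly F[3]}) u :
  mderiv i (\sum_j u 0 j *: p j) = \sum_j u 0 j *: mderiv i (p j).
Proof. by rewrite linear_sum; apply: eq_bigr => j _; rewrite linearZ. Qed.

Lemma meval_lincomb (p : 'I_6 -> {mpoly F[3]}) u Q :
  (\sum_j u 0 j *: p j).@[Q] = \sum_j u 0 j * (p j).@[Q].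
Proof. by rewrite raddf_sum; apply: eq_bigr => j _; rewrite /= mevalZ. Qed.

Lemma mul_point_row_tr u Q : u *m (point_row Q)^T = ((eta_comb u).@[Q])%:M.
Proof.
apply/matrixP => r l; rewrite !ord1 !mxE meval_lincomb.
by apply: eq_bigr => j _; rewrite !mxE.
Qed.

Lemma mul_first_derivs_tr u Q :
  u *m (first_derivs Q)^T = \row_i (mderiv i (eta_comb u)).@[Q].
Proof.
apply/rowP => i; rewrite !mxE mderiv_lincomb meval_lincomb.
by apply: eq_bigr => j _; rewrite !mxE.
Qed.

Lemma mul_second_derivs_tr u Q i :
  u *m (second_derivs i Q)^T = \row_k (mderiv k (mderiv i (eta_comb u))).@[Q].
Proof.
apply/rowP => k; rewrite !mxE /eta_comb 2!mderiv_lincomb meval_lincomb.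
by apply: eq_bigr => j _; rewrite !mxE.
Qed.

Lemma osc_kerE u Q : u *m (osc_matrix Q)^T = 0 <->
  forall i k, (mderiv k (mderiv i (eta_comb u))).@[Q] = 0.
Proof.
rewrite /osc_matrix !tr_col_mx !mul_mx_row mul_point_row_tr mul_first_derivs_tr.
rewrite !mul_second_derivs_tr; split.
  move=> /eqP; rewrite !row_mx_eq0 => /and5P[_ _ h0 h1 h2] i k.
  by case: (ord3P i) => ->; [move: h0 | move: h1 | move: h2] => /eqP/rowP/(_ k); rewrite !mxE.
move=> hess.
have d1 i : (mderiv i (eta_comb u)).@[Q] = 0.
  by apply: (meval_dhomog_eq0 (d := 2)) => //; apply: mderiv_dhomog (eta_comb_dhomog u).
have d0 : (eta_comb u).@[Q] = 0 by apply: (meval_dhomog_eq0 (eta_comb_dhomog u)).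
have row_eq0 (f : 'I_3 -> F) : (forall i, f i = 0) -> \row_i f i = 0.
  by move=> f0; apply/rowP => i; rewrite !mxE f0.
rewrite d0 (row_eq0 _ d1) (row_eq0 _ (hess 0)) (row_eq0 _ (hess 1)) (row_eq0 _ (hess 2)).
by rewrite raddf0 !row_mx0.
Qed.

Definition rv6 (x0 x1 x2 x3 x4 x5 : F) : 'rV[F]_6 :=
  \row_j [:: x0; x1; x2; x3; x4; x5]`_j.

Lemma rv6_ind (P : 'rV[F]_6 -> Prop) :
  (forall x0 x1 x2 x3 x4 x5, P (rv6 x0 x1 x2 x3 x4 x5)) -> forall u, P u.
Proof.
move=> Prv6 u.
suff -> : u = rv6 (u 0 (inord 0)) (u 0 (inord 1)) (u 0 (inord 2))
                  (u 0 (inord 3)) (u 0 (inord 4)) (u 0 (inord 5)) by [].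
apply/rowP => -[[|[|[|[|[|[|//]]]]]] ?]; rewrite !mxE /=.
all: by congr (u 0 _); apply: val_inj; rewrite /= inordK.
Qed.

Lemma rv6_coord (x0 x1 x2 x3 x4 x5 : F) k : (k < 6)%N ->
  rv6 x0 x1 x2 x3 x4 x5 0 (inord k) = [:: x0; x1; x2; x3; x4; x5]`_k.
Proof. by move=> lt_k6; rewrite mxE inordK. Qed.

Lemma rv6_eq0 : rv6 0 0 0 0 0 0 = 0.
Proof. by apply/rowP => -[[|[|[|[|[|[|//]]]]]] ?]; rewrite !mxE. Qed.

Lemma eta_combE x0 x1 x2 x3 x4 x5 :
  eta_comb (rv6 x0 x1 x2 x3 x4 x5) =
  x0 *: 'X_0 ^+ 3 + x1 *: 'X_1 ^+ 3 + x2 *: 'X_2 ^+ 3 +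
  x3 *: ('X_0 * ('X_1 ^+ 2 - 'X_2 ^+ 2)) + x4 *: ('X_1 * ('X_0 ^+ 2 - 'X_2 ^+ 2)) +
  x5 *: ('X_2 * ('X_0 ^+ 2 - 'X_1 ^+ 2)).
Proof. by rewrite /eta_comb !big_ord_recr big_ord0 /= !mxE add0r. Qed.

Local Ltac expand_hessian :=
  rewrite eta_combE !exprS !expr0 !mulr1;
  repeat progress rewrite ?mderivD ?mderivN ?mderivZ ?mderivM ?mderivXU /= ?mderivC ?mderiv0
    ?(mpolyC0, mpolyC1, mul0r, mulr0, mul1r, mulr1, add0r, addr0, oppr0, scaler0, subr0);
  rewrite ?(mevalD, mevalN, mevalZ, mevalM, mevalXU, meval1, meval0).

Lemma eta_comb_hessian Q x0 x1 x2 x3 x4 x5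
    (f := eta_comb (rv6 x0 x1 x2 x3 x4 x5)) (a := Q 0) (b := Q 1) (c := Q 2) :
  [/\ (mderiv 0 (mderiv 0 f)).@[Q] = 2 * (3 * a * x0 + b * x4 + c * x5),
      (mderiv 1 (mderiv 1 f)).@[Q] = 2 * (3 * b * x1 + a * x3 - c * x5)
    & (mderiv 2 (mderiv 2 f)).@[Q] = 2 * (3 * c * x2 - a * x3 - b * x4)] /\
  [/\ (mderiv 1 (mderiv 0 f)).@[Q] = 2 * (b * x3 + a * x4),
      (mderiv 2 (mderiv 0 f)).@[Q] = 2 * (a * x5 - c * x3)
    & (mderiv 2 (mderiv 1 f)).@[Q] = - 2 * (b * x5 + c * x4)].
Proof. by rewrite {}/f {}/a {}/b {}/c; do 2 split; expand_hessian; ring. Qed.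

Lemma osc_kerP Q x0 x1 x2 x3 x4 x5 (a := Q 0) (b := Q 1) (c := Q 2) :
  rv6 x0 x1 x2 x3 x4 x5 *m (osc_matrix Q)^T = 0 <->
  [/\ 3 * a * x0 + b * x4 + c * x5 = 0, 3 * b * x1 + a * x3 - c * x5 = 0
    & 3 * c * x2 - a * x3 - b * x4 = 0] /\
  [/\ b * x3 + a * x4 = 0, a * x5 - c * x3 = 0 & b * x5 + c * x4 = 0].
Proof.
have [[h00 h11 h22] [h01 h02 h12]] := eta_comb_hessian Q x0 x1 x2 x3 x4 x5.
rewrite osc_kerE; split => [hess | [[e00 e11 e22] [e01 e02 e12]] i k].
  have mtwo_neq0 : (- 2 : F) != 0 by rewrite oppr_eq0.
  move: h00 h11 h22 h01 h02 h12; rewrite !hess.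
  do 5 move=> /esym/(eq0_of_mulf two_neq0) ?.
  by move=> /esym/(eq0_of_mulf mtwo_neq0) ?; split; split.
have [-> | -> | ->] := ord3P i; have [-> | -> | ->] := ord3P k;
  rewrite ?[mderiv 0 (mderiv _ _)]mderiv_comm ?[mderiv 1 (mderiv 2 _)]mderiv_comm;
  by rewrite ?(h00, h11, h22, h01, h02, h12) ?(e00, e11, e22, e01, e02, e12) mulr0.
Qed.

Definition base_vec Q : 'rV[F]_6 :=
  let: (a, b, c) := (Q 0, Q 1, Q 2) in
  rv6 (b * c * (b ^+ 2 - c ^+ 2)) (c * a * (c ^+ 2 - a ^+ 2)) (a * b * (a ^+ 2 - b ^+ 2))
      (3 * a * b * c * a) (- (3 * a * b * c * b)) (3 * a * b * c * c).

Lemma base_vec_ker Q : base_vec Q *m (osc_matrix Q)^T = 0.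
Proof. by apply/osc_kerP; split; split; ring. Qed.

Lemma eq_of_lincomb (x y c00 c11 c22 c01 c02 c12 e00 e11 e22 e01 e02 e12 : F) :
  e00 = 0 -> e11 = 0 -> e22 = 0 -> e01 = 0 -> e02 = 0 -> e12 = 0 ->
  3 * (x - y) = c00 * e00 + c11 * e11 + c22 * e22 + c01 * e01 + c02 * e02 + c12 * e12 ->
  x = y.
Proof.
move=> -> -> -> -> -> ->; rewrite !mulr0 !addr0 => /(eq0_of_mulf three_neq0)/eqP.
by rewrite subr_eq0 => /eqP.
Qed.

Lemma base_vec_wedge Q u i j : u *m (osc_matrix Q)^T = 0 ->
  u 0 i * base_vec Q 0 j = u 0 j * base_vec Q 0 i.
Proof.
elim/rv6_ind: u => x0 x1 x2 x3 x4 x5 /osc_kerP; rewrite /base_vec.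
move: (Q 0) (Q 1) (Q 2) => a b c [[e00 e11 e22] [e01 e02 e12]].
wlog lt_ij : i j / (i < j)%N.
  by move=> wedge; have [/wedge | /wedge -> | /val_inj ->] := ltngtP i j.
have lc := eq_of_lincomb e00 e11 e22 e01 e02 e12.
(* Multipliers of the six equations in 3 (u_i v_j - u_j v_i), for i < j in
   lexicographic order; found by linear algebra over Q[a, b, c]. *)
case: i j lt_ij => -[|[|[|[|[|[|//]]]]]] ? [[|[|[|[|[|[|//]]]]]] ?] //= _; rewrite !mxE /=.
- by apply: (lc _ _ (c^+3 - a^+2 * c) (c^+3 - b^+2 * c) 0
                 (a * b * c) (a * c^+2) (- (b * c^+2))); ring.
- by apply: (lc _ _ (a^+2 * b - b^+3) 0 (b * c^+2 - b^+3)
                 (- (a * b^+2)) (- (a * b * c)) (b^+2 * c)); ring.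
- by apply: (lc _ _ (3 * a * b * c) 0 0 (- (3 * b^+2 * c)) (- (3 * b * c^+2)) 0); ring.
- by apply: (lc _ _ (- (3 * b^+2 * c)) 0 0 0 0 (3 * b * c^+2)); ring.
- by apply: (lc _ _ (3 * b * c^+2) 0 0 0 0 (- (3 * b^+2 * c))); ring.
- by apply: (lc _ _ 0 (a^+3 - a * b^+2) (a^+3 - a * c^+2)
                 (a^+2 * b - b * c^+2) (a^+2 * c - b^+2 * c) 0); ring.
- by apply: (lc _ _ 0 (3 * a^+2 * c) 0 0 (3 * a * c^+2) 0); ring.
- by apply: (lc _ _ 0 (- (3 * a * b * c)) 0
                 (3 * a^+2 * c - 3 * c^+3) (- (3 * b * c^+2)) 0); ring.
- by apply: (lc _ _ 0 (3 * a * c^+2) 0 0 (3 * a^+2 * c) 0); ring.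
- by apply: (lc _ _ 0 0 (3 * a^+2 * b) (3 * a * b^+2) 0 0); ring.
- by apply: (lc _ _ 0 0 (- (3 * a * b^+2)) (- (3 * a^+2 * b)) 0 0); ring.
- by apply: (lc _ _ 0 0 (3 * a * b * c) (3 * b^+2 * c) (3 * b^+3 - 3 * a^+2 * b) 0); ring.
- by apply: (lc _ _ 0 0 0 (- (9 * a * b * c)) 0 0); ring.
- by apply: (lc _ _ 0 0 0 0 (- (9 * a * b * c)) 0); ring.
- by apply: (lc _ _ 0 0 0 0 0 (9 * a * b * c)); ring.
Qed.

Lemma osc_rank_off_base Q : base_vec Q != 0 -> \rank (osc_matrix Q) = 5%N.
Proof.
move=> v_neq0; have [i vi_neq0] : exists i, base_vec Q 0 i != 0.
  have [i ? | v0] := pickP (fun i => base_vec Q 0 i != 0); first by exists i.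
  by case/eqP: v_neq0; apply/rowP => i; rewrite [RHS]mxE; move: (v0 i) => /negbFE/eqP.
rewrite -mxrank_tr; apply: (mxrank_ker_line (base_vec_ker Q) vi_neq0) => u uK ui0.
apply/rowP => j; rewrite mxE; apply: (eq0_of_mulf vi_neq0).
by rewrite mulrC -base_vec_wedge // ui0 mul0r.
Qed.

Lemma inZ_scaled Q t (x y z k : F) : nonzero3 Q -> (t < 9)%N ->
  nth (fun=> 0) (Zpts F) t = vec3 x y z ->
  Q 0 = k * x -> Q 1 = k * y -> Q 2 = k * z -> inZ Q.
Proof.
move=> [i Qi_neq0] lt_t9 Pt Q0 Q1 Q2.
have QE l : Q l = k * nth (fun=> 0) (Zpts F) t l by rewrite Pt; case: (ord3P l) => ->.
exists t => //; exists k; split => //.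
by apply: contraNneq Qi_neq0 => k0; rewrite QE k0 mul0r.
Qed.

Lemma mul_sqr_diff_eq0 (x y : F) : x * y * (x ^+ 2 - y ^+ 2) = 0 ->
  [\/ x = 0, y = 0, x = y | x = - y].
Proof.
move/eqP; rewrite !mulf_eq0 subr_eq0 eqf_sqr.
by case/orP => [/orP[] | /orP[]] /eqP;
  [constructor 1 | constructor 2 | constructor 3 | constructor 4].
Qed.

Lemma base_vec_eq0_inZ Q : nonzero3 Q -> base_vec Q = 0 -> inZ Q.
Proof.
move=> nzQ /rowP v0.
move: (v0 (inord 0)) (v0 (inord 1)) (v0 (inord 2)) (v0 (inord 3)).
rewrite !mxE !inordK //= => /mul_sqr_diff_eq0 v0_0 /mul_sqr_diff_eq0 v0_1.
move=> /mul_sqr_diff_eq0 v0_2.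
move/eqP; rewrite !mulf_eq0 (negbTE three_neq0) => abc0.
have {abc0} : [\/ Q 0 = 0, Q 1 = 0 | Q 2 = 0].
  by case/orP: abc0 => [/orP[/orP[] | ] | ] /eqP;
    [constructor 1 | constructor 2 | constructor 3 | constructor 1].
case=> Qi0; [case: v0_0 | case: v0_1 | case: v0_2] => Qj;
  [ apply: (@inZ_scaled Q 2 0 0 1 (Q 2)) | apply: (@inZ_scaled Q 1 0 1 0 (Q 1))
  | apply: (@inZ_scaled Q 7 0 1 1 (Q 1)) | apply: (@inZ_scaled Q 8 0 1 (-1) (Q 1))
  | apply: (@inZ_scaled Q 0 1 0 0 (Q 0)) | apply: (@inZ_scaled Q 2 0 0 1 (Q 2))
  | apply: (@inZ_scaled Q 5 1 0 1 (Q 0)) | apply: (@inZ_scaled Q 6 1 0 (-1) (Q 0))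
  | apply: (@inZ_scaled Q 1 0 1 0 (Q 1)) | apply: (@inZ_scaled Q 0 1 0 0 (Q 0))
  | apply: (@inZ_scaled Q 3 1 1 0 (Q 0)) | apply: (@inZ_scaled Q 4 1 (-1) 0 (Q 0)) ] => //;
  by rewrite ?mulr0 ?mulr1 ?mulrN1 ?Qi0 ?Qj ?opprK.
Qed.

Local Ltac simpl_zeros := rewrite ?(mul0r, mulr0, add0r, addr0, subr0, sub0r, oppr0).

Lemma osc_rank_vertex0 Q (a : F) : a != 0 -> Q 0 = a -> Q 1 = 0 -> Q 2 = 0 ->
  \rank (osc_matrix Q) = 4%N.
Proof.
move=> a_neq0 Q0 Q1 Q2; rewrite -mxrank_tr.
apply: (mxrank_ker_plane (w1 := rv6 0 1 0 0 0 0) (w2 := rv6 0 0 1 0 0 0)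
          (i := inord 1) (j := inord 2));
  rewrite ?rv6_coord ?oner_neq0 //;
  try by apply/osc_kerP; rewrite Q0 Q1 Q2; split; split; ring.
elim/rv6_ind => x0 x1 x2 x3 x4 x5; rewrite !rv6_coord //= => /osc_kerP + xi0 xj0.
rewrite Q0 Q1 Q2 xi0 xj0; simpl_zeros => -[[e00 e11 _] [e01 e02 _]].
rewrite (eq0_of_mulf (mulf_neq0 three_neq0 a_neq0) e00) (eq0_of_mulf a_neq0 e11).
by rewrite (eq0_of_mulf a_neq0 e01) (eq0_of_mulf a_neq0 e02) rv6_eq0.
Qed.

Lemma osc_rank_vertex1 Q (b : F) : b != 0 -> Q 0 = 0 -> Q 1 = b -> Q 2 = 0 ->
  \rank (osc_matrix Q) = 4%N.
Proof.
move=> b_neq0 Q0 Q1 Q2; rewrite -mxrank_tr.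
apply: (mxrank_ker_plane (w1 := rv6 1 0 0 0 0 0) (w2 := rv6 0 0 1 0 0 0)
          (i := inord 0) (j := inord 2));
  rewrite ?rv6_coord ?oner_neq0 //;
  try by apply/osc_kerP; rewrite Q0 Q1 Q2; split; split; ring.
elim/rv6_ind => x0 x1 x2 x3 x4 x5; rewrite !rv6_coord //= => /osc_kerP + xi0 xj0.
rewrite Q0 Q1 Q2 xi0 xj0; simpl_zeros => -[[e00 e11 _] [e01 _ e12]].
rewrite (eq0_of_mulf (mulf_neq0 three_neq0 b_neq0) e11) (eq0_of_mulf b_neq0 e00).
by rewrite (eq0_of_mulf b_neq0 e01) (eq0_of_mulf b_neq0 e12) rv6_eq0.
Qed.

Lemma osc_rank_vertex2 Q (c : F) : c != 0 -> Q 0 = 0 -> Q 1 = 0 -> Q 2 = c ->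
  \rank (osc_matrix Q) = 4%N.
Proof.
move=> c_neq0 Q0 Q1 Q2; rewrite -mxrank_tr.
apply: (mxrank_ker_plane (w1 := rv6 1 0 0 0 0 0) (w2 := rv6 0 1 0 0 0 0)
          (i := inord 0) (j := inord 1));
  rewrite ?rv6_coord ?oner_neq0 //;
  try by apply/osc_kerP; rewrite Q0 Q1 Q2; split; split; ring.
elim/rv6_ind => x0 x1 x2 x3 x4 x5; rewrite !rv6_coord //= => /osc_kerP + xi0 xj0.
rewrite Q0 Q1 Q2 xi0 xj0; simpl_zeros; rewrite -!mulNr => -[[e00 _ e22] [_ e02 e12]].
have Nc_neq0 : - c != 0 by rewrite oppr_eq0.
rewrite (eq0_of_mulf (mulf_neq0 three_neq0 c_neq0) e22) (eq0_of_mulf c_neq0 e00).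
by rewrite (eq0_of_mulf Nc_neq0 e02) (eq0_of_mulf c_neq0 e12) rv6_eq0.
Qed.

Lemma osc_rank_side01 Q (a b : F) : a != 0 -> b = a \/ b = - a ->
  Q 0 = a -> Q 1 = b -> Q 2 = 0 -> \rank (osc_matrix Q) = 4%N.
Proof.
move=> a_neq0 hb Q0 Q1 Q2; rewrite -mxrank_tr.
apply: (mxrank_ker_plane (w1 := rv6 (- b) a 0 (- (3 * b)) (3 * a) 0) (w2 := rv6 0 0 1 0 0 0)
          (i := inord 1) (j := inord 2));
  rewrite ?rv6_coord ?oner_neq0 //;
  try by apply/osc_kerP; rewrite Q0 Q1 Q2; case: hb => ->; split; split; ring.
elim/rv6_ind => x0 x1 x2 x3 x4 x5; rewrite !rv6_coord //= => /osc_kerP + xi0 xj0.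
rewrite Q0 Q1 Q2 xi0 xj0; simpl_zeros => -[[e00 e11 _] [e01 e02 _]].
move: (eq0_of_mulf a_neq0 e11) => x3_0; rewrite x3_0 mulr0 add0r in e01.
move: (eq0_of_mulf a_neq0 e01) => x4_0; rewrite x4_0 mulr0 addr0 in e00.
rewrite (eq0_of_mulf (mulf_neq0 three_neq0 a_neq0) e00) (eq0_of_mulf a_neq0 e02).
by rewrite x3_0 x4_0 rv6_eq0.
Qed.

Lemma osc_rank_side02 Q (a c : F) : a != 0 -> c = a \/ c = - a ->
  Q 0 = a -> Q 1 = 0 -> Q 2 = c -> \rank (osc_matrix Q) = 4%N.
Proof.
move=> a_neq0 hc Q0 Q1 Q2; rewrite -mxrank_tr.
have c_neq0 : c != 0 by case: hc => ->; rewrite ?oppr_eq0.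
apply: (mxrank_ker_plane (w1 := rv6 (- a) 0 c (3 * a) 0 (3 * c)) (w2 := rv6 0 1 0 0 0 0)
          (i := inord 0) (j := inord 1));
  rewrite ?rv6_coord ?oppr_eq0 ?oner_neq0 //;
  try by apply/osc_kerP; rewrite Q0 Q1 Q2; case: hc => ->; split; split; ring.
elim/rv6_ind => x0 x1 x2 x3 x4 x5; rewrite !rv6_coord //= => /osc_kerP + xi0 xj0.
rewrite Q0 Q1 Q2 xi0 xj0; simpl_zeros => -[[e00 e11 e22] [e01 _ _]].
move: (eq0_of_mulf c_neq0 e00) => x5_0; rewrite x5_0 mulr0 subr0 in e11.
move: (eq0_of_mulf a_neq0 e11) => x3_0; rewrite x3_0 mulr0 subr0 in e22.
rewrite (eq0_of_mulf (mulf_neq0 three_neq0 c_neq0) e22) (eq0_of_mulf a_neq0 e01).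
by rewrite x3_0 x5_0 rv6_eq0.
Qed.

Lemma osc_rank_side12 Q (b c : F) : b != 0 -> c = b \/ c = - b ->
  Q 0 = 0 -> Q 1 = b -> Q 2 = c -> \rank (osc_matrix Q) = 4%N.
Proof.
move=> b_neq0 hc Q0 Q1 Q2; rewrite -mxrank_tr.
have c_neq0 : c != 0 by case: hc => ->; rewrite ?oppr_eq0.
apply: (mxrank_ker_plane (w1 := rv6 0 (- b) c 0 (3 * b) (- (3 * c))) (w2 := rv6 1 0 0 0 0 0)
          (i := inord 1) (j := inord 0));
  rewrite ?rv6_coord ?oppr_eq0 ?oner_neq0 //;
  try by apply/osc_kerP; rewrite Q0 Q1 Q2; case: hc => ->; split; split; ring.
elim/rv6_ind => x0 x1 x2 x3 x4 x5; rewrite !rv6_coord //= => /osc_kerP + xi0 xj0.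
rewrite Q0 Q1 Q2 xi0 xj0; simpl_zeros; rewrite -!mulNr => -[[e00 e11 e22] [e01 _ _]].
have Nc_neq0 : - c != 0 by rewrite oppr_eq0.
move: (eq0_of_mulf Nc_neq0 e11) => x5_0; rewrite x5_0 mulr0 addr0 in e00.
move: (eq0_of_mulf b_neq0 e00) => x4_0; rewrite x4_0 mulr0 addr0 in e22.
rewrite (eq0_of_mulf (mulf_neq0 three_neq0 c_neq0) e22) (eq0_of_mulf b_neq0 e01).
by rewrite x4_0 x5_0 rv6_eq0.
Qed.

Lemma osc_rank_inZ Q : inZ Q -> \rank (osc_matrix Q) = 4%N.
Proof.
case=> t lt_t9 [k [k_neq0 QE]].
case: t lt_t9 QE => [|[|[|[|[|[|[|[|[|//]]]]]]]]] _ QE;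
  [ apply: (osc_rank_vertex0 (a := k)) | apply: (osc_rank_vertex1 (b := k))
  | apply: (osc_rank_vertex2 (c := k))
  | apply: (osc_rank_side01 (a := k) (b := k))
  | apply: (osc_rank_side01 (a := k) (b := - k))
  | apply: (osc_rank_side02 (a := k) (c := k))
  | apply: (osc_rank_side02 (a := k) (c := - k))
  | apply: (osc_rank_side12 (b := k) (c := k))
  | apply: (osc_rank_side12 (b := k) (c := - k)) ];
  rewrite ?QE //; by [left | right | exact: mulr1 | exact: mulr0 | exact: mulrN1].
Qed.

End Osculating.

Theorem mainTheorem5 (F : closedFieldType) (charF0 : [pchar F] =i pred0) :
  hypo_osculating F /\
  (forall Q : 'I_3 -> F, nonzero3 Q -> ~ inZ Q -> osc2_dim Q = 4%N) /\
  (forall Q : 'I_3 -> F, nonzero3 Q -> inZ Q -> osc2_dim Q = 3%N).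
Proof.
have [two_neq0 three_neq0] : (2 : F) != 0 /\ (3 : F) != 0.
  by move/pcharf0P: charF0 => char0; rewrite !char0.
have rank_Z (Q : 'I_3 -> F) := osc_rank_inZ two_neq0 three_neq0 (Q := Q).
have rank_off_Z (Q : 'I_3 -> F) := osc_rank_off_base two_neq0 three_neq0 (Q := Q).
have inZ_base (Q : 'I_3 -> F) := base_vec_eq0_inZ three_neq0 (Q := Q).
rewrite /hypo_osculating /osc2_dim; split; [|split].
- move=> Q nzQ.
  by have [/(inZ_base _ nzQ)/rank_Z -> | /rank_off_Z ->] := eqVneq (base_vec Q) 0.
- move=> Q nzQ notZ; rewrite rank_off_Z //.
  by apply/eqP => /(inZ_base _ nzQ).
- by move=> Q _ /rank_Z ->.
Qed.
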